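(* Let $G_1=(V_1,E_1)$ and $G_2=(V_2,E_2)$ be word-representable graphs with disjoint vertex sets, $\mathcal{R}(G_1)=k_1$, $\mathcal{R}(G_2)=k_2$, and let $x\in V_1$, $y\in V_2$, $k=\max(k_1,k_2)$. Let $G'$ be the graph with vertex set $V_1\cup V_2$ and edge set $E_1\cup E_2\cup\{(x,y)\}$, and let $G''$ be the graph obtained from $G_1$ and $G_2$ by identifying $x$ and $y$ into a single vertex $z$. Then: (1) if $|V_1|=|V_2|=1$, then $G'$ and $G''$ are complete graphs, $k_1=k_2=1$, and $\mathcal{R}(G')=\mathcal{R}(G'')=1$; (2) if $\min(|V_1|,|V_2|)=1$ and $\max(|V_1|,|V_2|)>1$, then $\mathcal{R}(G'')=k$ and $\mathcal{R}(G')=\max(k,2)$; (3) if $\min(|V_1|,|V_2|)>1$, then $\mathcal{R}(G')=\mathcal{R}(G'')=\max(k,2)$.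
   Context: All graphs are finite and simple. For a word $w$ and distinct letters $x,y$ occurring in $w$, $x$ and $y$ alternate in $w$ if deleting all letters other than copies of $x$ and $y$ yields a word of the form $xyxy\cdots$ or $yxyx\cdots$ (of even or odd length). A graph $G=(V,E)$ is word-representable if there is a word $w$ over $V$ (each vertex occurring in $w$) such that for all distinct $x,y\in V$, $x$ and $y$ alternate in $w$ iff $(x,y)\in E$. A word is $k$-uniform if each letter occurs exactly $k$ times; $G$ is $k$-word-representable if some $k$-uniform word represents it; the representation number $\mathcal{R}(G)$ is the least such $k$. *)

From mathcomp Require Import all_boot.
Set Implicit Arguments. Unset Strict Implicit. Unset Printing Implicit Defensive.

Definition simple_graph (T : finType) (e : rel T) : Prop :=
  symmetric e /\ irreflexive e.

Definition alternate (T : eqType) (w : seq T) (x y : T) : Prop :=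
  let s := filter (fun c => (c == x) || (c == y)) w in
  exists n, s = mkseq (fun i => if odd i then y else x) n
         \/ s = mkseq (fun i => if odd i then x else y) n.

Definition represents (T : finType) (e : rel T) (w : seq T) : Prop :=
  (forall v : T, v \in w) /\
  (forall x y : T, x != y -> (alternate w x y <-> e x y)).

Definition word_representable (T : finType) (e : rel T) : Prop :=
  exists w, represents e w.

Definition uniform (T : eqType) (k : nat) (w : seq T) : Prop :=
  forall v : T, count_mem v w = k.

Definition k_word_representable (T : finType) (e : rel T) (k : nat) : Prop :=
  exists w, uniform k w /\ represents e w.

Definition rep_number (T : finType) (e : rel T) (k : nat) : Prop :=
  k_word_representable e k /\ (forall k', k_word_representable e k' -> k <= k').

Definition complete_graph (T : finType) (e : rel T) : Prop :=
  forall u v : T, u != v -> e u v.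

Definition join_edge (T1 T2 : finType) (e1 : rel T1) (e2 : rel T2)
    (x : T1) (y : T2) : rel (T1 + T2) :=
  fun u v => match u, v with
  | inl a, inl b => e1 a b
  | inr a, inr b => e2 a b
  | inl a, inr b => (a == x) && (b == y)
  | inr a, inl b => (a == y) && (b == x)
  end.

(* G'' : G1 and G2 glued by identifying x and y into a single vertex z.
   Vertex set: T1 + (T2 \ {y}); the merged vertex z is inl x. *)
Definition glue_vertex (T1 T2 : finType) (e1 : rel T1) (e2 : rel T2)
    (x : T1) (y : T2) : rel (T1 + {v : T2 | v != y}) :=
  fun u v => match u, v with
  | inl a, inl b => e1 a b
  | inr a, inr b => e2 (val a) (val b)
  | inl a, inr b => (a == x) && e2 y (val b)
  | inr a, inl b => (b == x) && e2 (val a) y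
  end.
Arguments glue_vertex {T1 T2} e1 e2 x y.
Arguments join_edge {T1 T2} e1 e2 x y.

From mathcomp Require Import all_boot zify.
Set Implicit Arguments. Unset Strict Implicit. Unset Printing Implicit Defensive.

(** Rotating a k-uniform word changes no alternation, so for any letter z it can be
    brought to the form z u1 z u2 ... z uk; appending the last occurrences of all its
    letters raises the uniformity by one, again without changing alternations.  Given
    K-uniform words (K >= 2) on letter sets meeting only in z, the word
    z v1 u1 z u2 v2 ... z uK vK keeps the alternations inside each of them and has
    none across them.  Gluing representants of G1 and G2 at z = x = y represents G'';
    gluing the word (x y)^K to a representant of G1 at x and then a representant of G2
    at y represents G'.  The lower bounds come from induced subgraphs and from the fact
    that only complete graphs are 1-word-representable. *)

(** * Alternation in words *)

Section Alternation.
Variable T : eqType.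
Implicit Types (w s : seq T) (a b c d : T).

Definition neq_rel : rel T := fun u v => u != v.

Definition alternates w a b := sorted neq_rel (filter (pred2 a b) w).

Lemma alternatesC w a b : alternates w a b = alternates w b a.
Proof. by congr sorted; apply: eq_filter => c /=; rewrite orbC. Qed.

Definition alt_seq c d n := mkseq (fun i => if odd i then d else c) n.

Lemma alt_seqS c d n : alt_seq c d n.+1 = c :: alt_seq d c n.
Proof.
rewrite /alt_seq /mkseq /= -(addn0 1) iotaDl -map_comp.
by congr cons; apply: eq_map => i /=; case: (odd i).
Qed.

Lemma sorted_alt_seq c d n : c != d -> sorted neq_rel (alt_seq c d n).
Proof.
elim: n c d => [|[|n] IH] c d cd //.
have := IH d c; rewrite eq_sym cd !alt_seqS /= => /(_ isT) ->.
by rewrite /neq_rel cd.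
Qed.

Lemma pred2C c d : pred2 c d =1 pred2 d c.
Proof. by move=> u /=; rewrite orbC. Qed.

Lemma path_alt_seq c d s : c != d -> all (pred2 c d) s -> path neq_rel c s ->
  c :: s = alt_seq c d (size s).+1.
Proof.
elim: s c d => [|h s IH] c d cd /=; first by rewrite /alt_seq /mkseq.
case/andP=> /orP[] /eqP-> hs /andP[hc hp]; first by rewrite /neq_rel eqxx in hc.
rewrite [in RHS]alt_seqS -IH 1?eq_sym //.
by rewrite (eq_all (pred2C d c)).
Qed.

Lemma alternateE w a b : a != b -> alternate w a b <-> alternates w a b.
Proof.
rewrite /alternate /alternates -[fun c => _]/(pred2 a b : pred T) => ab.
split=> [[n [->|->]]|]; first exact: sorted_alt_seq.
  by apply: sorted_alt_seq; rewrite eq_sym.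
have : all (pred2 a b) (filter (pred2 a b) w) by rewrite filter_all.
case: (filter _ w) => [|c s]; first by exists 0; left.
case/andP=> /orP[] /eqP-> hs /= hp; exists (size s).+1; first by left; apply: path_alt_seq.
right; apply: path_alt_seq; rewrite 1?eq_sym //.
by rewrite (eq_all (pred2C b a)).
Qed.

Lemma sorted_neq_rev s : sorted neq_rel (rev s) = sorted neq_rel s.
Proof.
by rewrite rev_sorted; apply/idP/idP; apply: sub_sorted => u v; rewrite /neq_rel eq_sym.
Qed.

Lemma count_mem_path_neq c d s : c != d -> all (pred2 c d) s -> path neq_rel c s ->
  count_mem c (c :: s) = count_mem d (c :: s) + (last c s == c).
Proof.
elim: s c d => [|h s IH] c d cd /=; first by rewrite eqxx (negbTE cd).
case/andP=> /orP[] /eqP-> hs /andP[hc hp]; first by rewrite /neq_rel eqxx in hc.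
have := IH d c; rewrite eq_sym cd (eq_all (pred2C d c)) => /(_ isT hs hp) /=.
have : pred2 c d (last d s) by apply: (allP (s := d :: s)) (mem_last d s); rewrite /= eqxx orbT.
have dc : (d == c) = false by rewrite eq_sym (negbTE cd).
by case/orP=> /eqP->; rewrite !eqxx (negbTE cd) dc /=; lia.
Qed.

(* A balanced alternating cycle over {c, d} has even length, so it can be rotated. *)
Lemma sorted_rcons_balanced c d s : c != d -> all (pred2 c d) s ->
  count_mem c (c :: s) = count_mem d (c :: s) ->
  sorted neq_rel (c :: s) -> sorted neq_rel (rcons s c).
Proof.
move=> cd hs bal sorted_cs; have := count_mem_path_neq cd hs sorted_cs.
rewrite bal; case: s {hs bal} sorted_cs => [|h s] /=; first by rewrite eqxx; lia.
case/andP=> _ hp; rewrite rcons_path hp /neq_rel /=.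
by case: (last h s == c) => //; lia.
Qed.

Lemma sorted_rcons_balancedE c d s : c != d -> all (pred2 c d) s ->
  count_mem c (c :: s) = count_mem d (c :: s) ->
  sorted neq_rel (rcons s c) = sorted neq_rel (c :: s).
Proof.
move=> cd hs bal; apply/idP/idP; last exact: (sorted_rcons_balanced cd hs bal).
rewrite -sorted_neq_rev rev_rcons => /(sorted_rcons_balanced cd).
by rewrite -sorted_neq_rev rev_rcons revK all_rev /= !count_rev; apply.
Qed.

Lemma count_mem_filter (p : pred T) w u : p u -> count_mem u (filter p w) = count_mem u w.
Proof. by move=> pu; rewrite count_filter; apply: eq_count => v /=; case: eqP => // ->. Qed.

Lemma alternates_rot1 w a b : a != b -> count_mem a w = count_mem b w ->
  alternates (rot 1 w) a b = alternates w a b.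
Proof.
case: w => [|c w] // ab bal; rewrite rot1_cons /alternates filter_rcons /=.
case pc: ((c == a) || (c == b)) => //.
have bal' : count_mem a (filter (pred2 a b) (c :: w)) = count_mem b (filter (pred2 a b) (c :: w)).
  by rewrite !count_mem_filter /= ?eqxx ?orbT.
have hs : all (pred2 a b) (filter (pred2 a b) w) by rewrite filter_all.
rewrite /= pc in bal'; case/orP: pc => /eqP ec; subst c.
  exact (sorted_rcons_balancedE ab hs bal').
rewrite (eq_all (pred2C a b)) eq_sym in hs ab.
exact (sorted_rcons_balancedE ab hs (esym bal')).
Qed.

Lemma alternates_rot n w a b : a != b -> count_mem a w = count_mem b w ->
  alternates (rot n w) a b = alternates w a b.
Proof.
move=> ab bal; elim: n => [|n IH]; first by rewrite rot0.
have [lt_n|le_n] := ltnP n (size w); last by rewrite !rot_oversize // ltnW.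
have /permP count_rot : perm_eq (rot n w) w by rewrite perm_rot.
by rewrite rotS // alternates_rot1 // !count_rot.
Qed.

End Alternation.

Arguments neq_rel {T} u v.

(** * Uniform words and their block form *)

Section Uniform.
Variable T : eqType.
Implicit Types (w s : seq T) (a b c z : T) (us : seq (seq T)).

Lemma pred2_cover a b u v c : pred2 a b u -> pred2 a b v -> pred2 a b c ->
  u != v -> (c == u) || (c == v).
Proof. by rewrite /= => /orP[]/eqP-> /orP[]/eqP-> /orP[]/eqP->; rewrite ?eqxx ?orbT. Qed.

(* [undup s] keeps the last occurrences, so here it is the last two letters of [s]. *)
Lemma sorted_cat_undup s a b : a != b -> all (pred2 a b) s -> a \in s -> b \in s ->
  sorted neq_rel s -> sorted neq_rel (s ++ undup s).
Proof.
move=> ab; elim: s => [|c [|h t] IH] // /andP[pc hall] ha hb.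
  by move: ha hb; rewrite !inE => /eqP ea /eqP eb; rewrite ea eb eqxx in ab.
case/andP=> ch hs; move: hall => /andP[ph hall].
rewrite [undup _]/=; case: ifP => [c_in|c_notin].
  have cover u : pred2 a b u -> u \in h :: t.
    by move=> pu; case/orP: (pred2_cover pc ph pu ch) => /eqP->; rewrite ?inE ?eqxx.
  apply/andP; split=> //; apply: IH => //; first exact/andP.
    by apply: cover; rewrite /= eqxx.
  by apply: cover; rewrite /= eqxx orbT.
case: t c_notin hs hall {IH ha hb} => [|h2 t] c_notin; last first.
  case/andP=> hh2 _ /andP[ph2 _].
  case/orP: (pred2_cover pc ph ph2 ch) => /eqP e2; last by rewrite e2 /neq_rel eqxx in hh2.
  by rewrite e2 !inE eqxx orbT in c_notin.
by rewrite inE in c_notin; rewrite /= ch /neq_rel eq_sym c_notin.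
Qed.

Lemma alternates_cat_undup w a b : a != b -> a \in w -> b \in w ->
  alternates (w ++ undup w) a b = alternates w a b.
Proof.
move=> ab aw bw; rewrite /alternates filter_cat filter_undup.
apply/idP/idP; first by case/cat_sorted2.
by move=> hs; apply: (sorted_cat_undup ab); rewrite ?filter_all // mem_filter ?aw ?bw /= eqxx ?orbT.
Qed.

Lemma count_mem_cat_undup w c : count_mem c (w ++ undup w) = count_mem c w + (c \in w).
Proof. by rewrite count_cat (count_uniq_mem _ (undup_uniq w)) mem_undup. Qed.

(* Uniformity relative to the letters that occur, unlike [uniform]. *)
Definition uniform_in k w := forall c, c \in w -> count_mem c w = k.

Lemma uniform_in_raise m k w : uniform_in k w -> exists w',
  [/\ uniform_in (k + m) w', w' =i w &
      forall a b, a != b -> a \in w -> b \in w -> alternates w' a b = alternates w a b].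
Proof.
move=> hk; elim: m => [|m [w' [hu hm ha]]]; first by exists w; rewrite addn0.
exists (w' ++ undup w'); split.
- move=> c; rewrite mem_cat mem_undup orbb => hc.
  by rewrite count_mem_cat_undup hc hu // addnS addn1.
- by move=> c; rewrite mem_cat mem_undup orbb hm.
- by move=> a b ab aw bw; rewrite alternates_cat_undup ?hm //; apply: ha.
Qed.

Fixpoint blocks z us := if us is u :: us' then z :: u ++ blocks z us' else [::].

Lemma count_mem_blocks_sep z us : all (fun u => z \notin u) us ->
  count_mem z (blocks z us) = size us.
Proof.
elim: us => [|u us IH] // /andP[zu zus].
by rewrite /= eqxx count_cat IH // (count_memPn zu).
Qed.

Lemma count_mem_blocks z a us : a != z ->
  count_mem a (blocks z us) = count_mem a (flatten us).
Proof.
move=> az; elim: us => [|u us IH] //.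
by rewrite /= !count_cat IH eq_sym (negbTE az).
Qed.

Lemma blocks_decomposition z s : exists u0 us,
  [/\ s = u0 ++ blocks z us, z \notin u0 & all (fun u => z \notin u) us].
Proof.
elim: s => [|c s [u0 [us [-> zu0 zus]]]]; first by exists [::], [::].
have [->|cz] := eqVneq c z; first by exists [::], (u0 :: us); rewrite /= zu0.
by exists (c :: u0), us; rewrite inE negb_or eq_sym cz.
Qed.

(* Rotate [w] to start at an occurrence of [z]. *)
Lemma blocks_of_uniform w z k : z \in w -> uniform_in k w -> exists us,
  [/\ size us = k, all (fun u => z \notin u) us, perm_eq (blocks z us) w &
      forall a b, a != b -> a \in w -> b \in w ->
        alternates (blocks z us) a b = alternates w a b].
Proof.
move=> zw hk; have [u0 [us0 [ew zu0 _]]] := blocks_decomposition z w.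
have [u0' [us [ew' zu0' zus]]] := blocks_decomposition z (rot (size u0) w).
have u0'_nil : u0' = [::].
  move: ew'; rewrite {1}ew rot_size_cat.
  case: us0 ew => [|u1 us1] ew; first by move: zw; rewrite ew cats0 (negbTE zu0).
  by case: u0' zu0' => // c u0' + [ec]; rewrite -ec inE eqxx.
rewrite {}u0'_nil /= in ew'; have pw : perm_eq (rot (size u0) w) w by rewrite perm_rot.
exists us; rewrite -ew'; split => //.
- by rewrite -(count_mem_blocks_sep zus) -ew' (permP pw) hk.
- by move=> a b ab aw bw; rewrite alternates_rot // !hk.
Qed.

End Uniform.

(** * Gluing two uniform words at a common letter *)

Section Glue.
Variable T : eqType.
Implicit Types (a b z : T) (u v : seq T) (us vs : seq (seq T)) (p : pred T).

(* The word z v1 u1 z u2 v2 z u3 v3 ... z uk vk: restricted to the [u]-letters it is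
   z u1 z u2 ... z uk and to the [v]-letters z v1 z v2 ... z vk, while u1 and u2 are
   separated by z alone, which prevents any [u]-letter from alternating with a [v]-letter. *)
Definition glue z u1 v1 us vs :=
  z :: v1 ++ u1 ++ blocks z [seq uv.1 ++ uv.2 | uv <- zip us vs].

Lemma filter_nohas p s : ~~ has p s -> filter p s = [::].
Proof. by rewrite has_filter negbK => /eqP. Qed.

Lemma filter_blocks_zip_l p z us vs : size us = size vs -> ~~ has p (flatten vs) ->
  filter p (blocks z [seq uv.1 ++ uv.2 | uv <- zip us vs]) = filter p (blocks z us).
Proof.
elim: us vs => [|u us IH] [|v vs] // [/IH{}IH].
rewrite /= has_cat negb_or => /andP[pv /IH].
by rewrite /= !filter_cat (filter_nohas pv) cats0 => ->.
Qed.

Lemma filter_blocks_zip_r p z us vs : size us = size vs -> ~~ has p (flatten us) ->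
  filter p (blocks z [seq uv.1 ++ uv.2 | uv <- zip us vs]) = filter p (blocks z vs).
Proof.
elim: us vs => [|u us IH] [|v vs] // [/IH{}IH].
rewrite /= has_cat negb_or => /andP[pu /IH].
by rewrite /= !filter_cat (filter_nohas pu) => ->.
Qed.

Section GlueShape.
Variables (z : T) (u1 v1 : seq T) (us vs : seq (seq T)).
Hypothesis size_us_vs : size us = size vs.

Lemma filter_glue_l p : ~~ has p (v1 ++ flatten vs) ->
  filter p (glue z u1 v1 us vs) = filter p (blocks z (u1 :: us)).
Proof.
rewrite has_cat negb_or => /andP[pv1 pvs].
by rewrite /glue /= !filter_cat (filter_nohas pv1) filter_blocks_zip_l.
Qed.

Lemma filter_glue_r p : ~~ has p (u1 ++ flatten us) ->
  filter p (glue z u1 v1 us vs) = filter p (blocks z (v1 :: vs)).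
Proof.
rewrite has_cat negb_or => /andP[pu1 pus].
by rewrite /glue /= !filter_cat (filter_nohas pu1) filter_blocks_zip_r.
Qed.

Lemma perm_glue : perm_eq (glue z u1 v1 us vs) (blocks z (u1 :: us) ++ v1 ++ flatten vs).
Proof.
apply/permP => q; rewrite /glue /= !count_cat /=.
suff -> : count q (blocks z [seq uv.1 ++ uv.2 | uv <- zip us vs]) =
          count q (blocks z us) + count q (flatten vs) by lia.
elim: us vs size_us_vs => [|u us' IH] [|v vs'] // [/IH{}IH].
by rewrite /= !count_cat IH /=; lia.
Qed.

End GlueShape.

Lemma infix_nseq a n : 1 < n -> infix [:: a; a] (nseq n a).
Proof. by case: n => [|[|n]] // _; apply: prefix_infix. Qed.

Lemma not_sorted_infix_aa a s : infix [:: a; a] s -> ~~ sorted neq_rel s.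
Proof. by move/infix_sorted=> h; apply/negP=> /h; rewrite /= /neq_rel eqxx. Qed.

Lemma infix_filter_cons s p c t : infix s (filter p t) -> infix s (filter p (c :: t)).
Proof. by rewrite /=; case: (p c) => //; apply: (infix_catl [:: c]). Qed.

Lemma filter_pred2_notin a b u : b \notin u -> filter (pred2 a b) u = nseq (count_mem a u) a.
Proof.
elim: u => [|c u IH] //; rewrite inE negb_or => /andP[bc /IH{}IH] /=.
by rewrite IH (eq_sym c b) (negbTE bc) orbF; case: eqP => [->|].
Qed.

Lemma pigeonhole_sumn (l : seq (seq T)) (f : seq T -> nat) :
  size l < sumn (map f l) -> exists2 u, u \in l & 1 < f u.
Proof.
elim: l => [|u l IH] //= lt_l; have [gt_u|le_u] := ltnP 1 (f u).
  by exists u; rewrite ?inE ?eqxx.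
by have [v vl gt_v] := IH ltac:(lia); exists v; rewrite // inE vl orbT.
Qed.

Lemma mem_blocks z us u c : u \in us -> c \in u -> c \in blocks z us.
Proof.
elim: us => [|u' us IH] //; rewrite inE => /orP[/eqP<- cu|/IH{}IH /IH{}IH] /=.
  by rewrite inE mem_cat cu orbT.
by rewrite inE mem_cat IH !orbT.
Qed.

Lemma infix_filter_blocks_zip s p z us vs u : u \in us -> size us = size vs ->
  infix s (filter p u) -> infix s (filter p (blocks z [seq uv.1 ++ uv.2 | uv <- zip us vs])).
Proof.
elim: us vs => [|u' us IH] [|v vs] //= u_in [size_us] infix_u; apply: infix_filter_cons.
case/orP: u_in => [/eqP eu|u_in]; last by rewrite !filter_cat; apply/infix_catl/IH.
by rewrite -eu !filter_cat -catA; apply: infix_catr.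
Qed.

(* The k copies of [a] lie in the k - 1 stretches u1 z u2, u3, ..., uk of the glued word,
   none of which contains [b]; by pigeonhole two copies of [a] become adjacent once the
   other letters are deleted. *)
Lemma glue_not_alternates z u1 v1 us vs a b : size us = size vs -> 0 < size us ->
  a != z -> b != z -> b \notin blocks z (u1 :: us) ->
  count_mem a (blocks z (u1 :: us)) = (size us).+1 ->
  ~~ alternates (glue z u1 v1 us vs) a b.
Proof.
case: us vs => [|u2 us] [|v2 vs] // [size_us] _ az bz.
rewrite /= !(inE, mem_cat) (negbTE bz) /= !negb_or => /and3P[bu1 bu2 bus].
have [za zb] : (z == a) = false /\ (z == b) = false by rewrite !(eq_sym z) (negbTE az) (negbTE bz).
rewrite za !count_cat /= za count_cat count_mem_blocks // => count_a.
apply: (@not_sorted_infix_aa a); rewrite /glue /= za zb /=.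
rewrite !filter_cat /= za zb /= !filter_cat (filter_pred2_notin _ bu1) (filter_pred2_notin _ bu2).
apply: infix_catl.
have [two_a|] := ltnP 1 (count_mem a u1 + count_mem a u2).
  by rewrite -catA catA -nseqD; apply/infix_catr/infix_nseq.
rewrite leqNgt => /negP few_a.
have [u u_in gt_u] : exists2 u, u \in us & 1 < count_mem a u.
  by apply: pigeonhole_sumn; rewrite -count_flatten; lia.
apply/infix_catl/infix_catl/(infix_filter_blocks_zip _ u_in size_us).
rewrite filter_pred2_notin ?infix_nseq //.
by apply: contra bus => bu; apply: mem_blocks u_in bu.
Qed.

End Glue.

Section GlueWords.
Variable T : eqType.
Implicit Types (z : T) (us : seq (seq T)).

Lemma perm_blocks z us : perm_eq (blocks z us) (nseq (size us) z ++ flatten us).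
Proof.
apply/permP => q; elim: us => [|u us IH] //=.
by rewrite !count_cat IH count_cat; lia.
Qed.

Lemma uniform_in_split w z K : 0 < K -> z \in w -> uniform_in K w -> exists u1 us,
  [/\ size us = K.-1, perm_eq (blocks z (u1 :: us)) (nseq K z ++ (u1 ++ flatten us)),
      perm_eq w (nseq K z ++ (u1 ++ flatten us)), z \notin u1 ++ flatten us &
      forall a b, a != b -> a \in w -> b \in w ->
        alternates (blocks z (u1 :: us)) a b = alternates w a b].
Proof.
move=> K_gt0 zw uw; have [[|u1 us] [size_us zus pw alt]] := blocks_of_uniform zw uw.
  by move: K_gt0; rewrite -size_us.
have pB := perm_blocks z (u1 :: us); rewrite size_us in pB.
exists u1, us; split=> //; first by rewrite -size_us.
  by apply: perm_trans _ pB; rewrite perm_sym.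
by rewrite -[u1 ++ _]/(flatten (u1 :: us)); apply/negP => /flattenP[u /(allP zus) /negP].
Qed.

Lemma glue_words (W1 W2 : seq T) z K : 1 < K -> uniform_in K W1 -> uniform_in K W2 ->
  z \in W1 -> z \in W2 -> (forall c, c \in W1 -> c \in W2 -> c = z) ->
  exists W, [/\ uniform_in K W, (forall c, (c \in W) = (c \in W1) || (c \in W2)),
    (forall a b, a != b -> a \in W1 -> b \in W1 -> alternates W a b = alternates W1 a b),
    (forall a b, a != b -> a \in W2 -> b \in W2 -> alternates W a b = alternates W2 a b) &
    (forall a b, a \in W1 -> a != z -> b \in W2 -> b != z -> alternates W a b = false)].
Proof.
move=> K_gt1 uW1 uW2 zW1 zW2 W12.
have [u1 [us [size_us pB1 pW1 zR1 alt1]]] := uniform_in_split (ltnW K_gt1) zW1 uW1.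
have [v1 [vs [size_vs _ pW2 zR2 alt2]]] := uniform_in_split (ltnW K_gt1) zW2 uW2.
set R1 := u1 ++ flatten us in pB1 pW1 zR1; set R2 := v1 ++ flatten vs in pW2 zR2.
have size_eq : size us = size vs by rewrite size_us size_vs.
have memW1 c : (c \in W1) = (c == z) || (c \in R1).
  by rewrite (perm_mem pW1) mem_cat mem_nseq ltnW.
have memW2 c : (c \in W2) = (c == z) || (c \in R2).
  by rewrite (perm_mem pW2) mem_cat mem_nseq ltnW.
have R2W1 c : c \in R2 -> c \notin W1.
  by move=> cR2; apply: contra zR2 => cW1; rewrite -(W12 c) // memW2 cR2 orbT.
have R1W2 c : c \in R1 -> c \notin W2.
  by move=> cR1; apply: contra zR1 => cW2; rewrite -(W12 c) // memW1 cR1 orbT.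
have pW : perm_eq (glue z u1 v1 us vs) (W1 ++ R2).
  apply: perm_trans (perm_glue _ _ _ size_eq) _.
  by rewrite perm_cat2r perm_sym (perm_trans pW1) // perm_sym.
exists (glue z u1 v1 us vs); split.
- move=> c; rewrite (permP pW) count_cat (perm_mem pW) mem_cat.
  case/orP=> [cW1|cR2]; first by rewrite uW1 // (count_memPn (contraL (R2W1 c) cW1)) addn0.
  have cz : c != z by apply: contraNneq zR2 => <-.
  rewrite (count_memPn (R2W1 c cR2)) -(uW2 c); last by rewrite memW2 cR2 orbT.
  by rewrite (permP pW2) count_cat count_nseq /= eq_sym (negbTE cz).
- by move=> c; rewrite (perm_mem pW) mem_cat memW2; case: eqVneq => [->|_]; rewrite ?zW1.
- move=> a b ab aW1 bW1; rewrite -alt1 // /alternates filter_glue_l //.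
  by apply/hasPn => c /R2W1; apply: contra => /orP[]/eqP->.
- move=> a b ab aW2 bW2; rewrite -alt2 // /alternates filter_glue_r //.
  by apply/hasPn => c /R1W2; apply: contra => /orP[]/eqP->.
- move=> a b aW1 az bW2 bz; apply/negbTE/glue_not_alternates => //.
  + by rewrite size_us; lia.
  + rewrite (perm_mem pB1) mem_cat mem_nseq (negbTE bz) andbF.
    by apply: contra (R1W2 b) _; rewrite bW2.
  + by rewrite (permP pB1) -(permP pW1) uW1 // size_us prednK // ltnW.
Qed.

End GlueWords.

Lemma sorted_neq_uniq (T : eqType) (s : seq T) : uniq s -> sorted neq_rel s.
Proof.
elim: s => [|c [|d s] IH] // /andP[cs uniq_s].
apply/andP; split; last exact: IH.
by apply: contraNneq cs => ->; rewrite mem_head.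
Qed.

Section Representations.
Variables (T : finType) (e : rel T).
Implicit Types (w : seq T) (a b : T).

Lemma alternates_rep w a b : represents e w -> a != b -> alternates w a b = e a b.
Proof. by case=> _ rep ab; apply/idP/idP => [/alternateE/rep|/rep/alternateE]; apply. Qed.

Lemma represents_alternates w : (forall v, v \in w) ->
  (forall a b, a != b -> alternates w a b = e a b) -> represents e w.
Proof. by move=> allw alt; split=> // a b ab; rewrite alternateE // alt. Qed.

Lemma k_word_representable_gt0 k (t : T) : k_word_representable e k -> 0 < k.
Proof. by case=> w [uw [allw _]]; rewrite -(uw t) -has_count has_pred1. Qed.

Lemma complete_one_word_representable : complete_graph e -> k_word_representable e 1.
Proof.
move=> complete_e; exists (enum T); split.
  by move=> v; rewrite count_uniq_mem ?enum_uniq ?mem_enum.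
apply: represents_alternates => [v|a b ab]; first by rewrite mem_enum.
by rewrite complete_e //; apply/sorted_neq_uniq/filter_uniq/enum_uniq.
Qed.

Lemma one_word_representable_complete : k_word_representable e 1 -> complete_graph e.
Proof.
case=> w [uw rep] a b ab; rewrite -(alternates_rep rep ab).
apply/sorted_neq_uniq/filter_uniq/count_mem_uniq => v.
by rewrite uw; case: rep => ->.
Qed.

Lemma rep_number_complete (t : T) : complete_graph e -> rep_number e 1.
Proof.
move=> complete_e; split=> [|k]; first exact: complete_one_word_representable.
exact: k_word_representable_gt0.
Qed.

Lemma k_word_representable_ge2 k a b : a != b -> ~~ e a b -> k_word_representable e k -> 1 < k.
Proof.
move=> ab not_eab rep_k; have := k_word_representable_gt0 a rep_k.
case: k rep_k => [|[|k]] // /one_word_representable_complete complete_e _.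
by rewrite complete_e in not_eab.
Qed.

End Representations.

Lemma alternates_map (S U : eqType) (f : S -> U) w a b : injective f ->
  alternates (map f w) (f a) (f b) = alternates w a b.
Proof.
move=> inj_f; rewrite /alternates filter_map sorted_map.
rewrite (@eq_filter _ _ (pred2 a b)) => [|c]; last by rewrite /= !inj_eq.
by apply/idP/idP; apply: sub_sorted => u v; rewrite /= /neq_rel inj_eq.
Qed.

Lemma alternates_filter (T : eqType) (p : pred T) w a b : p a -> p b ->
  alternates (filter p w) a b = alternates w a b.
Proof.
move=> pa pb; rewrite /alternates -filter_predI; congr sorted; apply: eq_filter => c /=.
by case: eqVneq => [->|_]; case: eqVneq => [->|_]; rewrite ?pa ?pb ?andbF.
Qed.

Lemma image_representation (S : finType) (U : eqType) (e : rel S) (f : S -> U) k K w :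
  injective f -> uniform k w -> represents e w -> k <= K ->
  exists W, [/\ uniform_in K W, (forall c, c \in W -> exists a, c = f a),
    (forall a, f a \in W) & (forall a b, a != b -> alternates W (f a) (f b) = e a b)].
Proof.
move=> inj_f uw rep le_kK.
have uW : uniform_in k (map f w).
  by move=> _ /mapP[a _ ->]; rewrite count_map -(uw a); apply: eq_count => v /=; rewrite inj_eq.
have [W [uW' memW altW]] := uniform_in_raise (K - k) uW.
have fw a : f a \in map f w by rewrite map_f //; case: rep.
exists W; split.
- by rewrite subnKC in uW'.
- by move=> c; rewrite memW => /mapP[a _ ->]; exists a.
- by move=> a; rewrite memW.
- by move=> a b ab; rewrite altW ?alternates_map ?(alternates_rep rep) ?inj_eq.
Qed.

Definition getl (A B : Type) (t : A + B) : option A := if t is inl a then Some a else None.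
Definition getr (A B : Type) (t : A + B) : option B := if t is inr b then Some b else None.

Lemma inlK (A B : Type) : pcancel (@inl A B) (@getl A B). Proof. by []. Qed.

Lemma inrK (A B : Type) : pcancel (@inr A B) (@getr A B). Proof. by []. Qed.

Lemma getlK (A B : Type) : ocancel (@getl A B) inl. Proof. by case. Qed.

Lemma getrK (A B : Type) : ocancel (@getr A B) inr. Proof. by case. Qed.

Section InducedSubgraph.
Variables (S T : finType) (eS : rel S) (eT : rel T) (f : S -> T) (g : T -> option S).
Hypotheses (fK : pcancel f g) (gK : ocancel g f).
Hypothesis f_induced : forall a b, a != b -> eT (f a) (f b) = eS a b.

Lemma g_f_some (a : S) : (fun t => isSome (g t)) (f a).
Proof. by rewrite /= fK. Qed.

Lemma count_mem_pmap W a : count_mem a (pmap g W) = count_mem (f a) W.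
Proof.
rewrite -(count_mem_filter W (g_f_some a)) -(pmap_filter gK) count_map.
by apply: eq_count => v /=; rewrite (inj_eq (pcan_inj fK)).
Qed.

Lemma k_word_representable_induced k : k_word_representable eT k -> k_word_representable eS k.
Proof.
case=> W [uW rep]; exists (pmap g W); split=> [a|]; first by rewrite count_mem_pmap uW.
apply: represents_alternates => [a|a b ab].
  by rewrite -has_pred1 has_count count_mem_pmap -has_count has_pred1; case: rep.
rewrite -f_induced // -(alternates_rep rep) ?(inj_eq (pcan_inj fK)) //.
rewrite -(alternates_filter W (g_f_some a) (g_f_some b)) -(pmap_filter gK).
by rewrite alternates_map //; apply: pcan_inj fK.
Qed.

End InducedSubgraph.

(** * The graphs G'' and G' *)

Lemma sig_neq_void (T : eqType) (y : T) : (forall b, b = y) -> {v : T | v != y} -> False.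
Proof. by move=> T_y [b]; rewrite (T_y b) eqxx. Qed.

Section GlueVertex.
Variables (T1 T2 : finType) (e1 : rel T1) (e2 : rel T2) (x : T1) (y : T2).
Hypothesis e2_sym : symmetric e2.
Local Notation V := (T1 + {v : T2 | v != y})%type.
Local Notation G := (glue_vertex e1 e2 x y).

Definition glue_inr (b : T2) : V := if insub b is Some b' then inr b' else inl x.

Definition glue_inr_inv (t : V) : option T2 :=
  match t with inl a => if a == x then Some y else None | inr b => Some (val b) end.

Lemma glue_inr_y : glue_inr y = inl x.
Proof. by rewrite /glue_inr insubF // eqxx. Qed.

Lemma glue_inr_val (b : {v : T2 | v != y}) : glue_inr (val b) = inr b.
Proof. by rewrite /glue_inr valK. Qed.

Lemma glue_inrK : pcancel glue_inr glue_inr_inv.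
Proof.
by move=> b; rewrite /glue_inr; case: insubP => [b' _ <-|/negbNE/eqP->] //=; rewrite eqxx.
Qed.

Lemma glue_inr_invK : ocancel glue_inr_inv glue_inr.
Proof.
by case=> [a|b] /=; [case: eqVneq => [->|] //=; rewrite glue_inr_y | rewrite glue_inr_val].
Qed.

Lemma glue_inr_inj : injective glue_inr.
Proof. exact: pcan_inj glue_inrK. Qed.

Lemma glue_inr_inl b a : glue_inr b = inl a -> a = x.
Proof. by rewrite /glue_inr; case: insubP => [b' _ _|_] // [<-]. Qed.

Lemma represents_glue_vertex W K : uniform_in K W -> (forall c : V, c \in W) ->
  (forall a b, a != b -> alternates W (inl a) (inl b) = e1 a b) ->
  (forall a b, a != b -> alternates W (glue_inr a) (glue_inr b) = e2 a b) ->
  (forall a b, a != x -> alternates W (inl a) (inr b) = false) ->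
  k_word_representable G K.
Proof.
move=> uW allW alt1 alt2 cross; exists W; split; first by move=> v; apply: uW.
apply: represents_alternates => // -[a|a] [b|b] ab.
- by apply: alt1; apply: contraNneq ab => ->.
- have [->|ax] := eqVneq a x; last by rewrite cross //= (negbTE ax).
  have := alt2 y (val b); rewrite glue_inr_y glue_inr_val /= eqxx => -> //.
  by rewrite eq_sym (valP b).
- rewrite alternatesC; have [->|bx] := eqVneq b x; last by rewrite cross //= (negbTE bx).
  have := alt2 y (val a); rewrite glue_inr_y glue_inr_val /= eqxx e2_sym => -> //.
  by rewrite eq_sym (valP a).
- by have := alt2 (val a) (val b); rewrite !glue_inr_val => ->.
Qed.

Lemma glue_vertex_k_word_representable K k1 k2 : 1 < K ->
  k_word_representable e1 k1 -> k_word_representable e2 k2 -> k1 <= K -> k2 <= K ->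
  k_word_representable G K.
Proof.
move=> K_gt1 [w1 [uw1 rep1]] [w2 [uw2 rep2]] le_k1K le_k2K.
have [W1 [uW1 memW1 inW1 alt1]] :=
  image_representation (@inl_inj T1 {v : T2 | v != y}) uw1 rep1 le_k1K.
have [W2 [uW2 memW2 inW2 alt2]] := image_representation glue_inr_inj uw2 rep2 le_k2K.
have common c : c \in W1 -> c \in W2 -> c = inl x.
  by move=> /memW1[a ->] /memW2[b /esym/glue_inr_inl->].
have xW2 : inl x \in W2 by rewrite -glue_inr_y.
have [W [uW memW altW1 altW2 crossW]] := glue_words K_gt1 uW1 uW2 (inW1 x) xW2 common.
apply: (represents_glue_vertex uW).
- by case=> [a|b]; rewrite memW ?inW1 // -glue_inr_val inW2 orbT.
- by move=> a b ab; rewrite altW1 ?inW1 ?alt1.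
- by move=> a b ab; rewrite altW2 ?inW2 ?alt2 // (inj_eq glue_inr_inj).
- by move=> a b ax; rewrite crossW ?inW1 // -glue_inr_val inW2.
Qed.

Lemma glue_vertex_inr a b : a != b -> G (glue_inr a) (glue_inr b) = e2 a b.
Proof.
rewrite /glue_inr; case: insubP => [a' _ <-|/negbNE/eqP->];
  by case: insubP => [b' _ <-|/negbNE/eqP->] //=; rewrite eqxx.
Qed.

Lemma glue_vertex_induced1 k : k_word_representable G k -> k_word_representable e1 k.
Proof. exact: (k_word_representable_induced (eT := G) (@inlK _ _) (@getlK _ _)). Qed.

Lemma glue_vertex_induced2 k : k_word_representable G k -> k_word_representable e2 k.
Proof. exact: (k_word_representable_induced glue_inrK glue_inr_invK glue_vertex_inr). Qed.

Lemma glue_vertex_trivial2 k1 : (forall b : T2, b = y) ->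
  k_word_representable e1 k1 -> k_word_representable G k1.
Proof.
move=> T2_y [w1 [uw1 rep1]].
have [W1 [uW1 _ inW1 alt1]] :=
  image_representation (@inl_inj T1 {v : T2 | v != y}) uw1 rep1 (leqnn k1).
apply: (represents_glue_vertex uW1) => //.
- by case=> [a|b] //; case: (sig_neq_void T2_y b).
- by move=> a b; rewrite (T2_y a) (T2_y b) eqxx.
- by move=> a b; case: (sig_neq_void T2_y b).
Qed.

Lemma glue_vertex_trivial1 k2 : (forall a : T1, a = x) ->
  k_word_representable e2 k2 -> k_word_representable G k2.
Proof.
move=> T1_x [w2 [uw2 rep2]].
have [W2 [uW2 _ inW2 alt2]] := image_representation glue_inr_inj uw2 rep2 (leqnn k2).
apply: (represents_glue_vertex uW2) => //.
- by case=> [a|b]; rewrite ?(T1_x a) -?glue_inr_y -?glue_inr_val.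
- by move=> a b; rewrite (T1_x a) (T1_x b) eqxx.
- by move=> a b; rewrite (T1_x a) eqxx.
Qed.

End GlueVertex.

Section EdgeWord.
Variable T : eqType.
Implicit Types c d u : T.

Definition edge_word c d n := flatten (nseq n [:: c; d]).

Lemma mem_edge_word c d n u : (u \in edge_word c d n) = (0 < n) && pred2 c d u.
Proof.
by elim: n => [|n IH] //=; rewrite !inE IH /=; case: (u == c); case: (u == d); rewrite ?andbF.
Qed.

Lemma edge_word_uniform c d n : c != d -> uniform_in n (edge_word c d n).
Proof.
move=> cd u; rewrite mem_edge_word => /andP[_ cdu].
rewrite count_flatten map_nseq sumn_nseq /=.
by case/orP: cdu => /eqP->; rewrite eqxx ?(negbTE cd) 1?eq_sym ?(negbTE cd) mul1n.
Qed.

Lemma edge_word_alternates c d n : c != d -> alternates (edge_word c d n) c d.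
Proof.
move=> cd; rewrite /alternates (all_filterP _); last first.
  by apply/allP => u; rewrite mem_edge_word => /andP[].
have path_d m : path neq_rel d (edge_word c d m).
  by elim: m => //= m ->; rewrite /neq_rel cd eq_sym cd.
by case: n => //= n; rewrite /neq_rel cd path_d.
Qed.

End EdgeWord.

Section JoinEdge.
Variables (T1 T2 : finType) (e1 : rel T1) (e2 : rel T2) (x : T1) (y : T2).
Local Notation V := (T1 + T2)%type.
Local Notation G := (join_edge e1 e2 x y).

Lemma represents_join_edge W K : uniform_in K W -> (forall c : V, c \in W) ->
  (forall a b, a != b -> alternates W (inl a) (inl b) = e1 a b) ->
  (forall a b, a != b -> alternates W (inr a) (inr b) = e2 a b) ->
  alternates W (inl x) (inr y) ->
  (forall a b, (a != x) || (b != y) -> alternates W (inl a) (inr b) = false) ->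
  k_word_representable G K.
Proof.
move=> uW allW alt1 alt2 alt_xy cross; exists W; split; first by move=> v; apply: uW.
apply: represents_alternates => // -[a|a] [b|b] ab /=.
- by apply: alt1; apply: contraNneq ab => ->.
- by case: eqVneq => [->|ax]; case: eqVneq => [->|bx] //=; rewrite cross ?ax ?bx ?orbT.
- by rewrite alternatesC; case: eqVneq => [->|ay]; case: eqVneq => [->|bx] //=;
    rewrite cross ?ay ?bx ?orbT.
- by apply: alt2; apply: contraNneq ab => ->.
Qed.

Lemma join_edge_k_word_representable K k1 k2 : 1 < K ->
  k_word_representable e1 k1 -> k_word_representable e2 k2 -> k1 <= K -> k2 <= K ->
  k_word_representable G K.
Proof.
move=> K_gt1 [w1 [uw1 rep1]] [w2 [uw2 rep2]] le_k1K le_k2K.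
have [W1 [uW1 memW1 inW1 alt1]] := image_representation (@inl_inj T1 T2) uw1 rep1 le_k1K.
have [W2 [uW2 memW2 inW2 alt2]] := image_representation (@inr_inj T1 T2) uw2 rep2 le_k2K.
set E := edge_word (inl x : V) (inr y) K.
have xy : (inl x : V) != inr y by [].
have memE c : (c \in E) = pred2 (inl x) (inr y) c by rewrite mem_edge_word ltnW.
have xE : inl x \in E by rewrite memE /= eqxx.
have yE : inr y \in E by rewrite memE /= eqxx.
have common1 c : c \in W1 -> c \in E -> c = inl x.
  by move=> /memW1[a ->]; rewrite memE /= orbF => /eqP.
have [W12 [uW12 memW12 altW1 altE crossW1E]] :=
  glue_words K_gt1 uW1 (edge_word_uniform (n := K) xy) (inW1 x) xE common1.
have inW12 a : inl a \in W12 by rewrite memW12 inW1.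
have yW12 : inr y \in W12 by rewrite memW12 yE orbT.
have common2 c : c \in W12 -> c \in W2 -> c = inr y.
  by rewrite memW12 memE => /orP[/memW1[a ->] /memW2[]|/orP[]/eqP->] // /memW2[].
have [W [uW memW altW12 altW2 crossW]] := glue_words K_gt1 uW12 uW2 yW12 (inW2 y) common2.
apply: (represents_join_edge uW).
- by case=> [a|b]; rewrite memW ?inW12 ?inW2 ?orbT.
- by move=> a b ab; rewrite altW12 ?inW12 // altW1 ?inW1 ?alt1.
- by move=> a b ab; rewrite altW2 ?inW2 ?alt2.
- by rewrite altW12 ?inW12 // altE // edge_word_alternates.
- move=> a b; have [->|yb] := eqVneq b y; rewrite ?orbF ?orbT => ax.
    by rewrite altW12 ?inW12 // crossW1E ?inW1.
  by rewrite crossW ?inW12 ?inW2.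
Qed.

Lemma join_edge_induced1 k : k_word_representable G k -> k_word_representable e1 k.
Proof. exact: (k_word_representable_induced (eT := G) (@inlK _ _) (@getlK _ _)). Qed.

Lemma join_edge_induced2 k : k_word_representable G k -> k_word_representable e2 k.
Proof. exact: (k_word_representable_induced (eT := G) (@inrK _ _) (@getrK _ _)). Qed.

End JoinEdge.

(** * Representation numbers *)

Lemma card1_eq (T : finType) (t : T) : #|T| = 1 -> forall a, a = t.
Proof. by move=> T1; apply: (fintype_le1P _); rewrite T1. Qed.

Lemma card_gt1_neq (T : finType) (t : T) : 1 < #|T| -> exists a, a != t.
Proof.
case/card_gt1P=> [a [b [_ _ ab]]]; have [eat|] := eqVneq a t; last by exists a.
by exists b; rewrite -eat eq_sym.
Qed.

Lemma rep_number_uniq (T : finType) (e : rel T) k k' : rep_number e k -> rep_number e k' -> k = k'.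
Proof. by move=> [rep_k min_k] [rep_k' min_k']; apply/eqP; rewrite eqn_leq min_k ?min_k'. Qed.

Lemma rep_number_card1 (T : finType) (e : rel T) : #|T| = 1 -> rep_number e 1.
Proof.
move=> T1; have [t _] := fintype1 T1; apply: (rep_number_complete t) => a b.
by rewrite (card1_eq t T1 a) (card1_eq t T1 b) eqxx.
Qed.

Section RepresentationNumber.
Variables (T1 T2 : finType) (e1 : rel T1) (e2 : rel T2) (x : T1) (y : T2) (k1 k2 : nat).
Hypotheses (R1 : rep_number e1 k1) (R2 : rep_number e2 k2).

Lemma rep_number_join_edge : (1 < #|T1|) || (1 < #|T2|) ->
  rep_number (join_edge e1 e2 x y) (maxn (maxn k1 k2) 2).
Proof.
move=> nontrivial; split.
  by apply: (join_edge_k_word_representable x y _ R1.1 R2.1); rewrite ?leq_max ?leqnn ?orbT.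
move=> k rep_k; rewrite !geq_max (R1.2 _ (join_edge_induced1 rep_k)).
rewrite (R2.2 _ (join_edge_induced2 rep_k)) /=.
case/orP: nontrivial => [/(card_gt1_neq x)[a ax]|/(card_gt1_neq y)[b yb]].
  by apply: (@k_word_representable_ge2 _ _ _ (inl a) (inr y)) rep_k => //=; rewrite (negbTE ax).
by apply: (@k_word_representable_ge2 _ _ _ (inl x) (inr b)) rep_k => //=; rewrite (negbTE yb) andbF.
Qed.

Hypothesis e2_sym : symmetric e2.

Lemma rep_number_glue_vertex : 1 < #|T1| -> 1 < #|T2| ->
  rep_number (glue_vertex e1 e2 x y) (maxn (maxn k1 k2) 2).
Proof.
move=> /(card_gt1_neq x)[a ax] /(card_gt1_neq y)[b yb]; split.
  apply: (glue_vertex_k_word_representable x y e2_sym _ R1.1 R2.1);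
  by rewrite ?leq_max ?leqnn ?orbT.
move=> k rep_k; rewrite !geq_max (R1.2 _ (glue_vertex_induced1 rep_k)).
rewrite (R2.2 _ (glue_vertex_induced2 rep_k)) /=.
apply: (@k_word_representable_ge2 _ _ _ (inl a) (inr (exist _ b yb))) rep_k => //=.
by rewrite (negbTE ax).
Qed.

Lemma rep_number_glue_vertex_trivial1 : #|T1| = 1 -> rep_number (glue_vertex e1 e2 x y) k2.
Proof.
move=> T1_1; split; first exact: (glue_vertex_trivial1 e1 y e2_sym (card1_eq x T1_1) R2.1).
by move=> k /(glue_vertex_induced2)/R2.2.
Qed.

Lemma rep_number_glue_vertex_trivial2 : #|T2| = 1 -> rep_number (glue_vertex e1 e2 x y) k1.
Proof.
move=> T2_1; split; first exact: (glue_vertex_trivial2 _ e2_sym (card1_eq y T2_1) R1.1).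
by move=> k /glue_vertex_induced1/R1.2.
Qed.

End RepresentationNumber.

Unset Implicit Arguments.

Theorem theorem16 (T1 T2 : finType) (e1 : rel T1) (e2 : rel T2)
    (x : T1) (y : T2) (k1 k2 : nat) :
  simple_graph e1 -> simple_graph e2 ->
  word_representable e1 -> word_representable e2 ->
  rep_number e1 k1 -> rep_number e2 k2 ->
  let k := maxn k1 k2 in
  let G' := join_edge e1 e2 x y in
  let G'' := glue_vertex e1 e2 x y in
  (#|T1| = 1 -> #|T2| = 1 ->
     [/\ complete_graph G' /\ complete_graph G'', k1 = 1, k2 = 1,
         rep_number G' 1 & rep_number G'' 1]) /\
  (minn #|T1| #|T2| = 1 -> 1 < maxn #|T1| #|T2| ->
     rep_number G'' k /\ rep_number G' (maxn k 2)) /\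
  (1 < minn #|T1| #|T2| ->
     rep_number G' (maxn k 2) /\ rep_number G'' (maxn k 2)).
Proof.
move=> _ [e2_sym _] _ _ R1 R2 k G' G''; rewrite {}/k {}/G' {}/G''.
have k1_gt0 := k_word_representable_gt0 x R1.1.
have k2_gt0 := k_word_representable_gt0 y R2.1.
have k1_1 : #|T1| = 1 -> k1 = 1 by move/(rep_number_card1 e1)/(rep_number_uniq R1).
have k2_1 : #|T2| = 1 -> k2 = 1 by move/(rep_number_card1 e2)/(rep_number_uniq R2).
split; [|split].
- move=> T1_1 T2_1; have x_all := card1_eq x T1_1; have y_all := card1_eq y T2_1.
  have complete' : complete_graph (join_edge e1 e2 x y).
    by case=> [a|b] [a'|b']; rewrite ?(x_all a) ?(x_all a') ?(y_all b) ?(y_all b') /= ?eqxx.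
  have complete'' : complete_graph (glue_vertex e1 e2 x y).
    case=> [a|/(sig_neq_void y_all)//] [a'|/(sig_neq_void y_all)//].
    by rewrite (x_all a) (x_all a') eqxx.
  by split; rewrite ?k1_1 ?k2_1 //; apply: rep_number_complete (inl x) _.
- move=> min_eq1 max_gt1; split; last by apply: (rep_number_join_edge x y R1 R2); lia.
  have [[T1_1 _]|[T2_1 _]] : (#|T1| = 1 /\ 1 < #|T2|) \/ (#|T2| = 1 /\ 1 < #|T1|) by lia.
    have -> : maxn k1 k2 = k2 by have := k1_1 T1_1; lia.
    exact: (rep_number_glue_vertex_trivial1 e1 x y R2 e2_sym T1_1).
  have -> : maxn k1 k2 = k1 by have := k2_1 T2_1; lia.
  exact: (rep_number_glue_vertex_trivial2 x y R1 e2_sym T2_1).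
- move=> min_gt1; split; first by apply: (rep_number_join_edge x y R1 R2); lia.
  by apply: (rep_number_glue_vertex x y R1 R2 e2_sym); lia.
Qed.
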